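(* If a Banach space $Z$ admits a coarse embedding into $L_2$, then $Z$ (with its norm metric) is $\Lambda$-nontrivial.
   Context: A map $f:Z\to L_2$ is a coarse embedding if there are non-decreasing $\alpha,\beta:[0,\infty)\to[0,\infty)$ with $\beta(t)\to\infty$ and $\beta(\|x-y\|)\le\|f(x)-f(y)\|_2\le\alpha(\|x-y\|)$ for all $x,y$. A map $f:X\to L_2$ is $\tau$-thresholding if $d(x,y)\ge\tau$ implies $\|f(x)-f(y)\|_2\ge\tau$. Define $\Lambda_\tau(X,\varepsilon)=\inf\big\{\sup_{x,y\in X,\ d(x,y)\ge\varepsilon\tau}\frac{\varepsilon\|f(x)-f(y)\|_2}{d(x,y)}: f:X\to L_2\text{ is }\tau\text{-thresholding}\big\}$ and $\Lambda(X,\varepsilon)=\sup_{\tau>0}\Lambda_\tau(X,\varepsilon)$. $(X,d)$ is $\Lambda$-nontrivial if $\liminf_{\varepsilon\to0}\Lambda(X,\varepsilon)=0$. *)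

From Stdlib Require Import Reals Lra ClassicalEpsilon.
Open Scope R_scope.

Record NormedSpace := {
  ns_car :> Type;
  ns_zero : ns_car;
  ns_add : ns_car -> ns_car -> ns_car;
  ns_opp : ns_car -> ns_car;
  ns_scal : R -> ns_car -> ns_car;
  ns_norm : ns_car -> R;
  ns_addA : forall x y z, ns_add x (ns_add y z) = ns_add (ns_add x y) z;
  ns_addC : forall x y, ns_add x y = ns_add y x;
  ns_add0 : forall x, ns_add x ns_zero = x;
  ns_addN : forall x, ns_add x (ns_opp x) = ns_zero;
  ns_scal1 : forall x, ns_scal 1 x = x;
  ns_scalA : forall a b x, ns_scal a (ns_scal b x) = ns_scal (a * b) x;
  ns_scalDr : forall a x y, ns_scal a (ns_add x y) = ns_add (ns_scal a x) (ns_scal a y);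
  ns_scalDl : forall a b x, ns_scal (a + b) x = ns_add (ns_scal a x) (ns_scal b x);
  ns_norm_ge0 : forall x, 0 <= ns_norm x;
  ns_norm_eq0 : forall x, ns_norm x = 0 -> x = ns_zero;
  ns_normZ : forall a x, ns_norm (ns_scal a x) = Rabs a * ns_norm x;
  ns_normD : forall x y, ns_norm (ns_add x y) <= ns_norm x + ns_norm y
}.

Definition ns_dist (Z : NormedSpace) (x y : Z) : R :=
  ns_norm Z (ns_add Z x (ns_opp Z y)).

Definition is_Banach (Z : NormedSpace) : Prop :=
  forall u : nat -> Z,
    (forall eps, 0 < eps -> exists N, forall m n, (N <= m)%nat -> (N <= n)%nat ->
        ns_dist Z (u m) (u n) < eps) ->
    exists l : Z, forall eps, 0 < eps -> exists N, forall n, (N <= n)%nat ->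
        ns_dist Z (u n) l < eps.

(* ---------- The Hilbert space L_2 (realised as l_2 = L_2[0,1] up to isometry) ---------- *)
Definition sq_summable (a : nat -> R) : Prop :=
  exists s, infinite_sum (fun n => (a n) ^ 2) s.

Definition L2 : Type := { a : nat -> R | sq_summable a }.

(* sum of squares of a square-summable sequence (chosen by epsilon; it is the
   unique limit whenever the series converges, e.g. for differences of L2 elements) *)
Definition sum_sq (a : nat -> R) : R :=
  epsilon (inhabits 0) (fun s => infinite_sum (fun n => (a n) ^ 2) s).

Definition L2_dist (u v : L2) : R :=
  sqrt (sum_sq (fun n => proj1_sig u n - proj1_sig v n)).

Definition nondecreasing_on_nonneg (g : R -> R) : Prop :=
  forall s t, 0 <= s -> s <= t -> g s <= g t.

Definition coarse_embedding {X : Type} (d : X -> X -> R) (f : X -> L2) : Prop :=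
  exists alpha beta : R -> R,
    nondecreasing_on_nonneg alpha /\ nondecreasing_on_nonneg beta /\
    (forall t, 0 <= t -> 0 <= alpha t) /\ (forall t, 0 <= t -> 0 <= beta t) /\
    (forall M, exists T, forall t, T <= t -> M <= beta t) /\
    (forall x y, beta (d x y) <= L2_dist (f x) (f y) /\
                 L2_dist (f x) (f y) <= alpha (d x y)).

Definition thresholding {X : Type} (d : X -> X -> R) (tau : R) (f : X -> L2) : Prop :=
  forall x y, tau <= d x y -> tau <= L2_dist (f x) (f y).

(* Lambda_tau(X,eps) <= c, i.e.
   inf_{f tau-thresholding} sup_{d(x,y) >= eps*tau} eps*||f x - f y||/d(x,y) <= c *)
Definition Lambda_tau_le {X : Type} (d : X -> X -> R) (eps tau c : R) : Prop :=
  forall eta, 0 < eta ->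
    exists f : X -> L2, thresholding d tau f /\
      forall x y, eps * tau <= d x y ->
        eps * L2_dist (f x) (f y) / d x y <= c + eta.

(* Lambda(X,eps) = sup_{tau>0} Lambda_tau(X,eps) <= c *)
Definition Lambda_le {X : Type} (d : X -> X -> R) (eps c : R) : Prop :=
  forall tau, 0 < tau -> Lambda_tau_le d eps tau c.

(* liminf_{eps -> 0+} Lambda(X,eps) = 0  (Lambda >= 0, so this means:
   for every delta > 0 and eps0 > 0 there is eps in (0,eps0) with Lambda(X,eps) < delta) *)
Definition Lambda_nontrivial {X : Type} (d : X -> X -> R) : Prop :=
  forall delta eps0, 0 < delta -> 0 < eps0 ->
    exists eps c, 0 < eps /\ eps < eps0 /\ c < delta /\ Lambda_le d eps c.

From Stdlib Require Import Reals.
From Stdlib Require Import Lra ClassicalEpsilon.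
Open Scope R_scope.

(* A coarse embedding f of a normed space Z into L2 is rescaled into tau-thresholding
   maps whose Lipschitz ratio at scale eps*tau is small.

   1. A coarse map f with expansion bound alpha grows at most linearly,
      ||f x - f y|| <= A (1 + 2 d(x,y)) with A = alpha 1.  This holds on any metric
      space with midpoints: halve a long segment repeatedly and use the quasi-triangle
      inequality ||u - w||^2 <= 2 ||u - v||^2 + 2 ||v - w||^2 of L2.
   2. For R > 0 put b = beta R and g(x) = (tau/b) f((R/tau) x).  The compression
      bound beta makes g tau-thresholding, and linear growth gives
      (1/R) ||g x - g y|| / d(x,y) <= 3A/b whenever d(x,y) >= tau/R.
      Hence Lambda(Z, 1/R) <= 3A/beta(R).
   3. Since beta(R) -> oo, taking R large makes both 1/R and 3A/beta(R) as small as
      desired, which is Lambda-nontriviality. *)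

Lemma sum_lin (a b : nat -> R) (p q : R) (N : nat) :
  sum_f_R0 (fun n => p * a n + q * b n) N = p * sum_f_R0 a N + q * sum_f_R0 b N.
Proof. induction N as [|N IH]; simpl; [ring | rewrite IH; ring]. Qed.

Lemma cv_const (c : R) : Un_cv (fun _ => c) c.
Proof.
  intros e He; exists 0%nat; intros n _.
  unfold R_dist; rewrite Rminus_diag, Rabs_R0; lra.
Qed.

Lemma isum_lin (a b : nat -> R) (la lb p q : R) :
  infinite_sum a la -> infinite_sum b lb ->
  infinite_sum (fun n => p * a n + q * b n) (p * la + q * lb).
Proof.
  intros Ha Hb e He.
  assert (Hcv : Un_cv (fun N => p * sum_f_R0 a N + q * sum_f_R0 b N) (p * la + q * lb)).
  { apply CV_plus; apply CV_mult; auto using cv_const. }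
  destruct (Hcv e He) as [N HN]; exists N; intros n Hn.
  rewrite sum_lin; exact (HN n Hn).
Qed.

Lemma isum_scal (a : nat -> R) (la p : R) :
  infinite_sum a la -> infinite_sum (fun n => p * a n) (p * la).
Proof.
  intros Ha e He.
  destruct (CV_mult _ _ _ _ (cv_const p) Ha e He) as [N HN]; exists N; intros n Hn.
  replace (sum_f_R0 (fun n => p * a n) n) with (p * sum_f_R0 a n); [exact (HN n Hn) |].
  rewrite scal_sum; apply sum_eq; intros; ring.
Qed.

Lemma isum_le (a b : nat -> R) (la lb : R) :
  (forall n, a n <= b n) -> infinite_sum a la -> infinite_sum b lb -> la <= lb.
Proof.
  intros Hab Ha Hb; eapply Rle_cv_lim; [| exact Ha | exact Hb].
  intro N; apply sum_Rle; auto.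
Qed.

Definition L2_sqdist (u v : L2) : R := sum_sq (fun n => proj1_sig u n - proj1_sig v n).

(* The difference of two square-summable sequences is square-summable,
   by (a - b)^2 <= 2 a^2 + 2 b^2. *)
Lemma L2_diff_summable (u v : L2) :
  exists s, infinite_sum (fun n => (proj1_sig u n - proj1_sig v n) ^ 2) s.
Proof.
  destruct u as [a [sa Ha]], v as [b [sb Hb]]; simpl.
  destruct (Rseries_CV_comp (fun n => (a n - b n) ^ 2)
              (fun n => 2 * a n ^ 2 + 2 * b n ^ 2)) as [l Hl].
  - intro n; split; [apply pow2_ge_0 |].
    pose proof (pow2_ge_0 (a n + b n)); simpl in *; nra.
  - exists (2 * sa + 2 * sb); exact (isum_lin _ _ _ _ 2 2 Ha Hb).
  - exists l; exact Hl.
Qed.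

Lemma L2_sqdist_spec (u v : L2) :
  infinite_sum (fun n => (proj1_sig u n - proj1_sig v n) ^ 2) (L2_sqdist u v).
Proof. unfold L2_sqdist, sum_sq; apply epsilon_spec, L2_diff_summable. Qed.

Lemma L2_sqdist_ge0 (u v : L2) : 0 <= L2_sqdist u v.
Proof.
  pose proof (L2_sqdist_spec u v) as Hs.
  rewrite <- (Rmult_0_l (L2_sqdist u v)).
  refine (isum_le _ _ _ _ _ (isum_scal _ _ 0 Hs) Hs).
  intro n; rewrite Rmult_0_l; apply pow2_ge_0.
Qed.

Lemma L2_dist_sq (u v : L2) : L2_dist u v ^ 2 = L2_sqdist u v.
Proof.
  unfold L2_dist; fold (L2_sqdist u v); simpl; rewrite Rmult_1_r.
  apply sqrt_sqrt, L2_sqdist_ge0.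
Qed.

Lemma L2_dist_ge0 (u v : L2) : 0 <= L2_dist u v.
Proof. apply sqrt_pos. Qed.

(* Quasi-triangle inequality for squared distances, from (x - z)^2 <= 2(x - y)^2 + 2(y - z)^2. *)
Lemma L2_sqdist_quasi_triangle (u v w : L2) :
  L2_sqdist u w <= 2 * L2_sqdist u v + 2 * L2_sqdist v w.
Proof.
  refine (isum_le _ _ _ _ _ (L2_sqdist_spec u w)
            (isum_lin _ _ _ _ 2 2 (L2_sqdist_spec u v) (L2_sqdist_spec v w))).
  intro n; pose proof (pow2_ge_0 (proj1_sig u n + proj1_sig w n - 2 * proj1_sig v n)).
  simpl in *; nra.
Qed.

Lemma L2_scale_summable (s : R) (u : L2) : sq_summable (fun n => s * proj1_sig u n).
Proof.
  destruct u as [a [sa Ha]]; exists (s ^ 2 * sa).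
  intros e He; destruct (isum_scal _ _ (s ^ 2) Ha e He) as [N HN]; exists N; intros n Hn.
  erewrite sum_eq; [exact (HN n Hn) | intros; simpl; ring].
Qed.

Definition L2_scale (s : R) (u : L2) : L2 := exist _ _ (L2_scale_summable s u).

Lemma L2_dist_scale (s : R) (u v : L2) :
  0 <= s -> L2_dist (L2_scale s u) (L2_scale s v) = s * L2_dist u v.
Proof.
  intro Hs.
  assert (Hsq : L2_sqdist (L2_scale s u) (L2_scale s v) = s ^ 2 * L2_sqdist u v).
  { apply (uniqueness_sum (fun n => (s * proj1_sig u n - s * proj1_sig v n) ^ 2));
      [exact (L2_sqdist_spec (L2_scale s u) (L2_scale s v)) |].
    intros e He; destruct (isum_scal _ _ (s ^ 2) (L2_sqdist_spec u v) e He) as [N HN].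
    exists N; intros n Hn.
    erewrite sum_eq; [exact (HN n Hn) | intros; simpl; ring]. }
  unfold L2_dist; fold (L2_sqdist (L2_scale s u) (L2_scale s v)) (L2_sqdist u v).
  rewrite Hsq, sqrt_mult_alt by (apply pow2_ge_0).
  f_equal; rewrite <- Rsqr_pow2; apply sqrt_Rsqr, Hs.
Qed.

Section NormedSpaceGeometry.
Variable Z : NormedSpace.
Local Notation add := (ns_add Z).
Local Notation opp := (ns_opp Z).
Local Notation scal := (ns_scal Z).

Lemma ns_scal0 (v : Z) : scal 0 v = ns_zero Z.
Proof.
  assert (H : add (scal 0 v) (scal 0 v) = scal 0 v)
    by (rewrite <- ns_scalDl; f_equal; ring).
  rewrite <- (ns_add0 Z (scal 0 v)), <- (ns_addN Z (scal 0 v)), ns_addA, H.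
  reflexivity.
Qed.

Lemma ns_opp_scal (v : Z) : opp v = scal (-1) v.
Proof.
  assert (H : add v (scal (-1) v) = ns_zero Z).
  { rewrite <- (ns_scal1 Z v) at 1; rewrite <- ns_scalDl.
    replace (1 + -1) with 0 by ring; apply ns_scal0. }
  rewrite <- (ns_add0 Z (opp v)), <- H, ns_addA, (ns_addC Z (opp v) v), ns_addN,
    ns_addC, ns_add0.
  reflexivity.
Qed.

Lemma ns_dist_scal (l : R) (x y : Z) :
  0 <= l -> ns_dist Z (scal l x) (scal l y) = l * ns_dist Z x y.
Proof.
  intro Hl; unfold ns_dist; rewrite !ns_opp_scal, ns_scalA.
  replace (-1 * l) with (l * -1) by ring.
  rewrite <- ns_scalA, <- ns_scalDr, ns_normZ, Rabs_pos_eq; auto.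
Qed.

Definition ns_midpoint (x y : Z) : Z := scal (/ 2) (add x y).

Lemma ns_dist_midpoint_l (x y : Z) :
  ns_dist Z x (ns_midpoint x y) = / 2 * ns_dist Z x y.
Proof.
  unfold ns_dist, ns_midpoint; rewrite !ns_opp_scal.
  replace (add x (scal (-1) (scal (/ 2) (add x y)))) with (scal (/ 2) (add x (scal (-1) y))).
  - rewrite ns_normZ, Rabs_pos_eq; lra.
  - rewrite ns_scalA, !ns_scalDr, ns_scalA, ns_addA; f_equal; [| f_equal; lra].
    rewrite <- (ns_scal1 Z x) at 2; rewrite <- ns_scalDl; f_equal; lra.
Qed.

Lemma ns_dist_midpoint_r (x y : Z) :
  ns_dist Z (ns_midpoint x y) y = / 2 * ns_dist Z x y.
Proof.
  unfold ns_dist, ns_midpoint; rewrite !ns_opp_scal.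
  replace (add (scal (/ 2) (add x y)) (scal (-1) y)) with (scal (/ 2) (add x (scal (-1) y))).
  - rewrite ns_normZ, Rabs_pos_eq; lra.
  - rewrite !ns_scalDr, ns_scalA, <- ns_addA; f_equal.
    rewrite <- ns_scalDl; f_equal; lra.
Qed.

End NormedSpaceGeometry.

(** * Maps bounded at scale 1 grow linearly on spaces with midpoints *)

Section MidpointGrowth.
Variables (X : Type) (d : X -> X -> R) (mid : X -> X -> X) (f : X -> L2) (A : R).
Hypothesis d_ge0 : forall x y, 0 <= d x y.
Hypothesis d_mid_l : forall x y, d x (mid x y) = / 2 * d x y.
Hypothesis d_mid_r : forall x y, d (mid x y) y = / 2 * d x y.
Hypothesis bounded_at_scale_1 : forall x y, d x y <= 1 -> L2_dist (f x) (f y) <= A.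

(* Induction on the dyadic scale: a segment longer than 1 is split at its midpoint,
   and the quasi-triangle inequality turns 2 (d/2)^2 + 2 (d/2)^2 into d^2. *)
Lemma sqdist_growth_dyadic (m : nat) (x y : X) :
  d x y <= 2 ^ m -> L2_sqdist (f x) (f y) <= A ^ 2 * Rmax 1 (4 * d x y ^ 2).
Proof.
  revert x y; induction m as [|m IH]; intros x y Hd.
  all: destruct (Rle_lt_dec (d x y) 1) as [Hsmall | Hlarge].
  all: try (rewrite <- L2_dist_sq;
            pose proof (bounded_at_scale_1 x y Hsmall); pose proof (L2_dist_ge0 (f x) (f y));
            pose proof (Rmax_l 1 (4 * d x y ^ 2)); nra).
  - simpl in Hd; lra.
  - simpl in Hd.
    assert (Hl := IH x (mid x y) ltac:(rewrite d_mid_l; lra)).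
    assert (Hr := IH (mid x y) y ltac:(rewrite d_mid_r; lra)).
    rewrite d_mid_l, Rmax_right in Hl by nra.
    rewrite d_mid_r, Rmax_right in Hr by nra.
    rewrite Rmax_right by nra.
    pose proof (L2_sqdist_quasi_triangle (f x) (f (mid x y)) (f y)); nra.
Qed.

Lemma linear_growth (x y : X) : 0 <= A -> L2_dist (f x) (f y) <= A * (1 + 2 * d x y).
Proof.
  intro HA.
  destruct (Pow_x_infinity 2 ltac:(rewrite Rabs_pos_eq; lra) (d x y)) as [m Hm].
  specialize (Hm m (Nat.le_refl m)); rewrite Rabs_pos_eq in Hm by (apply pow_le; lra).
  pose proof (sqdist_growth_dyadic m x y ltac:(lra)) as Hsq.
  rewrite <- L2_dist_sq in Hsq.
  pose proof (d_ge0 x y).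
  assert (Hmax : Rmax 1 (4 * d x y ^ 2) <= (1 + 2 * d x y) ^ 2) by (apply Rmax_lub; nra).
  apply Rsqr_incr_0_var; [rewrite !Rsqr_pow2 | nra].
  assert (0 <= A ^ 2) by apply pow2_ge_0; nra.
Qed.

End MidpointGrowth.

(** * Rescaling a coarse embedding into thresholding maps *)

Section Rescaling.
Variables (Z : NormedSpace) (f : Z -> L2) (alpha beta : R -> R).
Hypothesis beta_mono : nondecreasing_on_nonneg beta.
Hypothesis compression : forall x y, beta (ns_dist Z x y) <= L2_dist (f x) (f y).
Hypothesis expansion : forall x y, L2_dist (f x) (f y) <= alpha (ns_dist Z x y).
Hypothesis alpha_mono : nondecreasing_on_nonneg alpha.
Hypothesis alpha1_ge0 : 0 <= alpha 1.

Lemma coarse_linear_growth (x y : Z) :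
  L2_dist (f x) (f y) <= alpha 1 * (1 + 2 * ns_dist Z x y).
Proof.
  apply (linear_growth Z (ns_dist Z) (ns_midpoint Z)); auto.
  - intros; apply ns_norm_ge0.
  - apply ns_dist_midpoint_l.
  - apply ns_dist_midpoint_r.
  - intros u v Huv; eapply Rle_trans; [apply expansion |].
    apply alpha_mono; [apply ns_norm_ge0 | exact Huv].
Qed.

(* The map x |-> (tau/b) f((R/tau) x): distance tau is blown up to R, where f
   separates points by at least b = beta R, which is then scaled back to tau. *)
Definition zoom (tau Rs : R) (x : Z) : L2 :=
  L2_scale (tau / beta Rs) (f (ns_scal Z (Rs / tau) x)).

Variables (tau Rs : R).
Hypothesis tau_pos : 0 < tau.
Hypothesis Rs_pos : 0 < Rs.
Hypothesis beta_pos : 0 < beta Rs.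

Lemma zoom_dist (x y : Z) :
  L2_dist (zoom tau Rs x) (zoom tau Rs y)
  = tau / beta Rs * L2_dist (f (ns_scal Z (Rs / tau) x)) (f (ns_scal Z (Rs / tau) y))
  /\ ns_dist Z (ns_scal Z (Rs / tau) x) (ns_scal Z (Rs / tau) y) = Rs / tau * ns_dist Z x y.
Proof.
  split; [apply L2_dist_scale | apply ns_dist_scal];
    apply Rlt_le, Rdiv_lt_0_compat; assumption.
Qed.

Lemma zoom_thresholding : thresholding (ns_dist Z) tau (zoom tau Rs).
Proof.
  intros x y Hxy; destruct (zoom_dist x y) as [-> Hd].
  assert (Hsep : beta Rs <= L2_dist (f (ns_scal Z (Rs / tau) x)) (f (ns_scal Z (Rs / tau) y))).
  { eapply Rle_trans; [| apply compression]; apply beta_mono; [lra |].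
    rewrite Hd; unfold Rdiv; rewrite Rmult_assoc, (Rmult_comm (/ tau)).
    rewrite <- (Rmult_1_r Rs) at 1; apply Rmult_le_compat_l; [lra |].
    rewrite <- (Rinv_r tau) by lra; apply Rmult_le_compat_r; [| exact Hxy].
    apply Rlt_le, Rinv_0_lt_compat, tau_pos. }
  replace tau with (tau / beta Rs * beta Rs) at 1 by (field; lra).
  apply Rmult_le_compat_l; [apply Rlt_le, Rdiv_lt_0_compat |]; assumption.
Qed.

(* At distances at least tau/R the zoomed map has ratio at most 3 (alpha 1)/beta R:
   tau ||f' - f'|| <= alpha 1 (tau + 2 R d) <= 3 (alpha 1) R d. *)
Lemma zoom_ratio (x y : Z) :
  / Rs * tau <= ns_dist Z x y ->
  / Rs * L2_dist (zoom tau Rs x) (zoom tau Rs y) / ns_dist Z x y <= 3 * alpha 1 / beta Rs.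
Proof.
  intro Hxy; destruct (zoom_dist x y) as [-> Hd].
  set (t := ns_dist Z x y) in *.
  set (L := L2_dist (f (ns_scal Z (Rs / tau) x)) (f (ns_scal Z (Rs / tau) y))).
  assert (Ht : 0 < t) by (eapply Rlt_le_trans; [| exact Hxy];
                          apply Rmult_lt_0_compat; [apply Rinv_0_lt_compat |]; lra).
  assert (HL : L <= alpha 1 * (1 + 2 * (Rs / tau * t)))
    by (unfold L; rewrite <- Hd; apply coarse_linear_growth).
  assert (Htt : tau <= Rs * t).
  { apply (Rmult_le_reg_l (/ Rs)); [apply Rinv_0_lt_compat; lra |].
    rewrite <- Rmult_assoc, Rinv_l, Rmult_1_l by lra; exact Hxy. }
  assert (Hkey : tau * L <= 3 * alpha 1 * Rs * t).
  { apply Rle_trans with (tau * (alpha 1 * (1 + 2 * (Rs / tau * t)))).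
    - apply Rmult_le_compat_l; lra.
    - replace (tau * (alpha 1 * (1 + 2 * (Rs / tau * t))))
        with (alpha 1 * tau + 2 * alpha 1 * Rs * t) by (field; lra).
      nra. }
  replace (/ Rs * (tau / beta Rs * L) / t) with (tau * L / (Rs * beta Rs * t)) by (field; lra).
  replace (3 * alpha 1 / beta Rs) with (3 * alpha 1 * Rs * t / (Rs * beta Rs * t))
    by (field; lra).
  apply Rmult_le_compat_r; [| exact Hkey].
  apply Rlt_le, Rinv_0_lt_compat, Rmult_lt_0_compat; [apply Rmult_lt_0_compat |]; lra.
Qed.

End Rescaling.

Lemma Lambda_le_of_coarse (Z : NormedSpace) (f : Z -> L2) (alpha beta : R -> R) (Rs : R) :
  nondecreasing_on_nonneg alpha -> nondecreasing_on_nonneg beta ->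
  (forall x y, beta (ns_dist Z x y) <= L2_dist (f x) (f y)) ->
  (forall x y, L2_dist (f x) (f y) <= alpha (ns_dist Z x y)) ->
  0 <= alpha 1 -> 0 < Rs -> 0 < beta Rs ->
  Lambda_le (ns_dist Z) (/ Rs) (3 * alpha 1 / beta Rs).
Proof.
  intros Ha Hb Hcomp Hexp HA HR Hbeta tau Htau eta Heta.
  exists (zoom Z f beta tau Rs); split.
  - apply (zoom_thresholding Z f beta); assumption.
  - intros x y Hxy.
    pose proof (zoom_ratio Z f alpha beta Hexp Ha HA tau Rs Htau HR Hbeta x y Hxy); lra.
Qed.

Theorem lemma5p6 (Z : NormedSpace) :
  is_Banach Z ->
  (exists f : Z -> L2, coarse_embedding (ns_dist Z) f) ->
  Lambda_nontrivial (ns_dist Z).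
Proof.
  intros _ [f [alpha [beta [Ha [Hb [Ha0 [_ [Hbeta_unbounded Hab]]]]]]]] delta eps0 Hdelta Heps0.
  set (A := alpha 1); assert (HA : 0 <= A) by (apply Ha0; lra).
  (* choose R > 1/eps0 with beta R >= 3 (A + 1) / delta *)
  destruct (Hbeta_unbounded (3 * (A + 1) / delta)) as [T HT].
  set (Rs := Rmax T (1 + / eps0)).
  assert (HRs : 1 + / eps0 <= Rs) by apply Rmax_r.
  assert (Hinv : 0 < / eps0) by (apply Rinv_0_lt_compat; lra).
  assert (Hbeta : 3 * (A + 1) / delta <= beta Rs) by (apply HT, Rmax_l).
  assert (Hlow : 0 < 3 * (A + 1) / delta) by (apply Rdiv_lt_0_compat; lra).
  exists (/ Rs), (3 * A / beta Rs); repeat split.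
  - apply Rinv_0_lt_compat; lra.
  - rewrite <- (Rinv_inv eps0); apply Rinv_lt_contravar; [apply Rmult_lt_0_compat |]; lra.
  - apply Rle_lt_trans with (3 * A / (3 * (A + 1) / delta)).
    + unfold Rdiv at 1 2; apply Rmult_le_compat_l; [lra |].
      apply Rinv_le_contravar; assumption.
    + replace (3 * A / (3 * (A + 1) / delta)) with (delta * (A / (A + 1))) by (field; lra).
      rewrite <- (Rmult_1_r delta) at 2; apply Rmult_lt_compat_l; [lra |].
      apply (Rmult_lt_reg_r (A + 1)); [lra |]; field_simplify; lra.
  - apply (Lambda_le_of_coarse Z f alpha beta); try assumption; try lra;
      intros x y; apply Hab.
Qed.
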